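(* Let $a\in(0,1)$, $b>0$, and $p_0=a/(2b+1)$. Define for $t\in(0,1)$ \[ Q_{p_0}(t)=\frac{(1-t)^{-p_0}F(a,b;2b+1;t)}{F(a,b+1;2b+1;t)}. \] If $a-b>1/2$ then $Q_{p_0}$ is strictly decreasing on $(0,1)$; if $a-b<1/2$ then $Q_{p_0}$ is strictly increasing on $(0,1)$; if $a-b=1/2$ then $Q_{p_0}\equiv1$. Consequently, for all $t\in(0,1)$, \[ F(a,b;2b+1;t)<(1-t)^{p_0}F(a,b+1;2b+1;t)\ \text{ if } a-b>1/2, \] and the reverse strict inequality holds for all $t\in(0,1)$ if $a-b<1/2$.
   Context: For real $a,b,c$ with $c\notin\{0,-1,-2,\dots\}$, $F(a,b;c;x)=\sum_{n\ge0}\frac{(a)_n(b)_n}{(c)_n}\frac{x^n}{n!}$ for $x\in(-1,1)$, where $(a)_0=1$ and $(a)_n=a(a+1)\cdots(a+n-1)$. *)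

From Stdlib Require Import Reals Factorial.
From Coquelicot Require Import Coquelicot.
Open Scope R_scope.

Fixpoint poch (a : R) (n : nat) : R :=
  match n with
  | O => 1
  | S k => poch a k * (a + INR k)
  end.

(* Gauss hypergeometric series F(a,b;c;x) = sum_n (a)_n (b)_n / (c)_n x^n / n!.
   (Coquelicot's Series is the sum of the series; the series converges for
   x in (-1,1) when c is not a non-positive integer.) *)
Definition hypF (a b c x : R) : R :=
  Series (fun n => poch a n * poch b n / poch c n * x ^ n / INR (fact n)).

Definition p0 (a b : R) : R := a / (2 * b + 1).

Definition Qp0 (a b t : R) : R :=
  Rpower (1 - t) (- p0 a b) * hypF a b (2 * b + 1) t / hypF a (b + 1) (2 * b + 1) t.

(* Let r = F(a,b;2b+1;t) / F(a,b+1;2b+1;t). Two contiguous relations give the Riccati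
   equation t(1-t) r' = b(1-t) + (b-a) t r - b r^2, so the derivative of Q_{p0} has the sign
   of N = b(1-t) + b(1-2p0) t r - b r^2. This N vanishes at 0 and solves a linear equation
   N' = A N + (1-2p0) B whose source B is positive because r > (1-t)/(1-(1-p0)t), a bound
   obtained by a comparison argument for another linear equation of the same kind. Hence N,
   and with it Q_{p0}', has the sign of 1 - 2p0, which is the sign of 1/2 - (a-b). *)

From Stdlib Require Import Reals Lra Factorial.
From Coquelicot Require Import Coquelicot.
Open Scope R_scope.

Lemma is_derive_pos_left (f : R -> R) x l d : is_derive f x l -> 0 < l -> 0 < d ->
  exists s, x - d < s < x /\ f s < f x.
Proof.
  intros Hf hl hd; apply is_derive_Reals in Hf.
  destruct (Hf (l / 2) ltac:(lra)) as [del Hdel].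
  pose proof (cond_pos del) as hdel.
  pose proof (Rmin_l del d); pose proof (Rmin_r del d).
  assert (0 < Rmin del d) by (apply Rmin_pos; lra).
  set (h := - Rmin del d / 2).
  assert (Hh : Rabs h < del) by (unfold h; rewrite Rabs_left; lra).
  specialize (Hdel h ltac:(unfold h; lra) Hh).
  apply Rabs_def2 in Hdel; destruct Hdel as [_ Hq].
  assert (E : (f (x + h) - f x) / h * h = f (x + h) - f x) by (field; unfold h; lra).
  exists (x + h); split; [unfold h; lra|].
  assert (h < 0) by (unfold h; lra).
  nra.
Qed.

(* At a minimum point below zero, [w] would still be decreasing from the left. *)
Lemma nonneg_of_deriv_pos_where_neg (w w' : R -> R) al be : al < be ->
  (forall t, al <= t <= be -> is_derive w t (w' t)) ->
  (forall t, al < t <= be -> w t < 0 -> 0 < w' t) ->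
  0 <= w al -> 0 <= w be.
Proof.
  intros hab Hd Hpos H0.
  destruct (Rle_or_lt 0 (w be)) as [h|h]; [exact h|exfalso].
  destruct (continuity_ab_min w al be ltac:(lra)) as [m [Hmin Hm]].
  { intros t ht; apply derivable_continuous_pt; exists (w' t).
    apply is_derive_Reals, Hd, ht. }
  assert (w m <= w be) by (apply Hmin; lra).
  assert (m <> al) by (intros ->; lra).
  destruct (is_derive_pos_left w m (w' m) (m - al) (Hd m Hm)) as [s [hs Hs]];
    [apply Hpos; lra | lra |].
  assert (w m <= w s) by (apply Hmin; lra).
  lra.
Qed.

Section LinearODE.

Variables phi phi' A B : R -> R.
Hypothesis phi_derive : forall t, 0 <= t < 1 -> is_derive phi t (phi' t).
Hypothesis phi_0 : phi 0 = 0.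
Hypothesis phi_ode : forall t, 0 < t < 1 -> phi' t = A t * phi t + B t.
Hypothesis A_bounded_above : forall t, 0 < t < 1 -> exists K, forall u, 0 < u <= t -> A u <= K.

(* The weight [exp (- (K + 1) t)] makes the derivative positive wherever [phi] is negative;
   only an upper bound on [A] is used, so [A] may tend to [-oo] at [0]. *)
Lemma linear_ode_nonneg : (forall t, 0 < t < 1 -> 0 <= B t) ->
  forall t, 0 < t < 1 -> 0 <= phi t.
Proof.
  intros HB t ht.
  destruct (A_bounded_above t ht) as [K HK].
  set (w := fun u => phi u * exp (- (K + 1) * u)).
  assert (Hw : forall u, 0 <= u <= t ->
    is_derive w u ((phi' u - (K + 1) * phi u) * exp (- (K + 1) * u))).
  { intros u hu; pose proof (phi_derive u ltac:(lra)) as Hd.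
    unfold w; auto_derive; [exists (phi' u); exact Hd|].
    replace (Derive (fun x => phi x) u) with (phi' u)
      by (symmetry; apply is_derive_unique, Hd).
    ring. }
  enough (0 <= w t) by (unfold w in *; pose proof (exp_pos (- (K + 1) * t)); nra).
  apply (nonneg_of_deriv_pos_where_neg w _ 0 t ltac:(lra) Hw).
  2: unfold w; rewrite phi_0; lra.
  intros u hu Hneg; unfold w in Hneg; pose proof (exp_pos (- (K + 1) * u)).
  assert (phi u < 0) by nra.
  rewrite phi_ode by lra.
  pose proof (HK u hu); pose proof (HB u ltac:(lra)).
  apply Rmult_lt_0_compat; [nra | auto].
Qed.

Lemma linear_ode_pos : (forall t, 0 < t < 1 -> 0 < B t) ->
  forall t, 0 < t < 1 -> 0 < phi t.
Proof.
  intros HB.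
  assert (Hnn : forall t, 0 < t < 1 -> 0 <= phi t)
    by (apply linear_ode_nonneg; intros t ht; left; auto).
  intros t ht; destruct (Hnn t ht) as [h|h]; [exact h|exfalso].
  assert (Hd' : 0 < phi' t)
    by (rewrite phi_ode, <- h by exact ht; rewrite Rmult_0_r, Rplus_0_l; auto).
  destruct (is_derive_pos_left phi t (phi' t) t (phi_derive t ltac:(lra)) Hd' ltac:(lra))
    as [s [hs Hs]].
  pose proof (Hnn s ltac:(lra)); lra.
Qed.

End LinearODE.

Lemma linear_ode_sign (phi phi' A B : R -> R) sigma :
  (forall t, 0 <= t < 1 -> is_derive phi t (phi' t)) ->
  phi 0 = 0 ->
  (forall t, 0 < t < 1 -> phi' t = A t * phi t + sigma * B t) ->
  (forall t, 0 < t < 1 -> exists K, forall u, 0 < u <= t -> A u <= K) ->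
  (forall t, 0 < t < 1 -> 0 < B t) ->
  forall t, 0 < t < 1 -> exists k, 0 < k /\ phi t = sigma * k.
Proof.
  intros Hd H0 Hode HA HB t ht.
  destruct (Rtotal_order sigma 0) as [hs | [hs | hs]].
  - exists (phi t / sigma); split; [|field; lra].
    assert (0 < - phi t).
    { apply (linear_ode_pos (fun u => - phi u) (fun u => - phi' u) A (fun u => - sigma * B u));
        auto.
      - intros u hu; apply (is_derive_opp phi), Hd, hu.
      - rewrite H0; ring.
      - intros u hu; rewrite Hode by exact hu; ring.
      - intros u hu; pose proof (HB u hu); nra. }
    replace (phi t / sigma) with (- phi t / - sigma) by (field; lra).
    apply Rdiv_lt_0_compat; lra.
  - exists 1; split; [lra|]; subst sigma.
    assert (0 <= phi t) by
      (apply (linear_ode_nonneg phi phi' A (fun u => 0 * B u)); auto; intros; lra).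
    assert (0 <= - phi t).
    { apply (linear_ode_nonneg (fun u => - phi u) (fun u => - phi' u) A (fun u => 0 * B u));
        auto; [intros u hu; apply (is_derive_opp phi), Hd, hu | rewrite H0; ring
               | intros u hu; rewrite Hode by exact hu; ring | intros; lra]. }
    lra.
  - exists (phi t / sigma); split; [|field; lra].
    apply Rdiv_lt_0_compat; [|lra].
    apply (linear_ode_pos phi phi' A (fun u => sigma * B u)); auto.
    intros u hu; pose proof (HB u hu); nra.
Qed.

Lemma MVT_is_derive (f f' : R -> R) s t : s < t ->
  (forall c, s <= c <= t -> is_derive f c (f' c)) ->
  exists c, s < c < t /\ f t - f s = f' c * (t - s).
Proof.
  intros hst Hd; destruct (MVT_cor2 f f' s t hst) as [c [E Hc]].
  - intros c hc; apply is_derive_Reals, Hd, hc.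
  - exists c; auto.
Qed.

Lemma frac_bounded_above (N : R -> R) k : 0 <= k -> (forall u, 0 < u < 1 -> N u <= k * u) ->
  forall t, 0 < t < 1 -> exists K, forall u, 0 < u <= t -> N u / (u * (1 - u)) <= K.
Proof.
  intros hk HN t ht; exists (k / (1 - t)); intros u hu.
  assert (Hu : 0 < u * (1 - u)) by nra.
  apply Rle_trans with (k * u / (u * (1 - u))).
  - apply Rmult_le_compat_r; [left; apply Rinv_0_lt_compat, Hu | apply HN; lra].
  - replace (k * u / (u * (1 - u))) with (k / (1 - u)) by (field; lra).
    apply Rmult_le_compat_l; [exact hk|]; apply Rinv_le_contravar; lra.
Qed.

Lemma poch_pos x n : 0 < x -> 0 < poch x n.
Proof.
  intro hx; induction n as [|n IH]; simpl; [lra|].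
  pose proof (pos_INR n); apply Rmult_lt_0_compat; lra.
Qed.

Lemma poch_le_compat x y n : 0 < x -> x <= y -> poch x n <= poch y n.
Proof.
  intros hx hxy; induction n as [|n IH]; simpl; [lra|].
  pose proof (pos_INR n); pose proof (poch_pos x n hx).
  apply Rmult_le_compat; lra.
Qed.

Lemma poch_1 n : poch 1 n = INR (fact n).
Proof.
  induction n as [|n IH]; simpl poch; [reflexivity|].
  rewrite IH, fact_simpl, mult_INR, S_INR; ring.
Qed.

Lemma poch_shift x n : x * poch (x + 1) n = poch x n * (x + INR n).
Proof.
  induction n as [|n IH]; simpl poch; [simpl; ring|].
  rewrite S_INR, <- Rmult_assoc, IH; ring.
Qed.

Definition hyp_coef (a b c : R) (n : nat) : R :=
  poch a n * poch b n / poch c n / INR (fact n).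

Lemma hypF_PSeries a b c x : hypF a b c x = PSeries (hyp_coef a b c) x.
Proof. apply Series_ext; intro n; unfold hyp_coef, Rdiv; ring. Qed.

Lemma hyp_coef_0 a b c : hyp_coef a b c 0 = 1.
Proof. unfold hyp_coef; simpl; field. Qed.

Lemma hyp_coef_pos a b c n : 0 < a -> 0 < b -> 0 < c -> 0 < hyp_coef a b c n.
Proof.
  intros; unfold hyp_coef.
  pose proof (poch_pos a n); pose proof (poch_pos b n); pose proof (poch_pos c n).
  pose proof (INR_fact_lt_0 n).
  repeat apply Rdiv_lt_0_compat; auto; apply Rmult_lt_0_compat; auto.
Qed.

Lemma hyp_coef_le_1 a b c n : 0 < a <= 1 -> 0 < b <= c -> hyp_coef a b c n <= 1.
Proof.
  intros [ha ha1] [hb hbc]; unfold hyp_coef.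
  pose proof (poch_le_compat a 1 n ha ha1) as Ha; rewrite poch_1 in Ha.
  pose proof (poch_le_compat b c n hb hbc).
  pose proof (poch_pos a n ha); pose proof (poch_pos b n hb).
  pose proof (poch_pos c n ltac:(lra)); pose proof (INR_fact_lt_0 n).
  assert (poch a n * poch b n <= INR (fact n) * poch c n) by (apply Rmult_le_compat; lra).
  apply (Rmult_le_reg_r (INR (fact n) * poch c n)); [apply Rmult_lt_0_compat; lra|].
  replace (poch a n * poch b n / poch c n / INR (fact n) * (INR (fact n) * poch c n))
    with (poch a n * poch b n) by (field; lra).
  lra.
Qed.

Lemma hyp_coef_shift a b c n : b * hyp_coef a (b + 1) c n = hyp_coef a b c n * (b + INR n).
Proof.
  unfold hyp_coef.
  transitivity (poch a n * (b * poch (b + 1) n) / poch c n / INR (fact n));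
    [unfold Rdiv; ring|].
  rewrite poch_shift; unfold Rdiv; ring.
Qed.

Lemma CV_radius_hyp_coef a b c : 0 < a <= 1 -> 0 < b <= c ->
  Rbar_le 1 (CV_radius (hyp_coef a b c)).
Proof.
  intros Ha Hb; apply CV_radius_bounded.
  exists 1; intro n; rewrite pow1, Rmult_1_r.
  pose proof (hyp_coef_pos a b c n ltac:(lra) ltac:(lra) ltac:(lra)).
  pose proof (hyp_coef_le_1 a b c n Ha Hb).
  rewrite Rabs_pos_eq; lra.
Qed.

Lemma hyp_coef_inside a b c x : 0 < a <= 1 -> 0 < b <= c -> Rabs x < 1 ->
  Rbar_lt (Rabs x) (CV_radius (hyp_coef a b c)).
Proof.
  intros Ha Hb Hx; eapply Rbar_lt_le_trans; [|apply CV_radius_hyp_coef; eauto].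
  exact Hx.
Qed.

Lemma ex_pseries_hyp_coef a b c x : 0 < a <= 1 -> 0 < b <= c -> Rabs x < 1 ->
  ex_pseries (hyp_coef a b c) x.
Proof. intros; apply CV_radius_inside, hyp_coef_inside; auto. Qed.

Lemma PSeries_ge_coef0 (u : nat -> R) x : (forall n, 0 <= u n) -> 0 <= x ->
  ex_pseries u x -> u 0%nat <= PSeries u x.
Proof.
  intros hu hx hex; apply ex_pseries_R in hex; unfold PSeries.
  rewrite Series_incr_1 by exact hex; rewrite pow_O, Rmult_1_r.
  enough (0 <= Series (fun k => u (S k) * x ^ S k)) by lra.
  rewrite <- (PSeries_const_0 x); apply Series_le.
  - intro n; rewrite Rmult_0_l; split; [lra|].
    apply Rmult_le_pos; [apply hu | apply pow_le; exact hx].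
  - exact (proj1 (ex_series_incr_1 (fun k => u k * x ^ k)) hex).
Qed.

Lemma hypF_0 a b c : hypF a b c 0 = 1.
Proof. rewrite hypF_PSeries, PSeries_0; apply hyp_coef_0. Qed.

Lemma hypF_ge_1 a b c x : 0 < a <= 1 -> 0 < b <= c -> 0 <= x < 1 -> 1 <= hypF a b c x.
Proof.
  intros Ha Hb Hx; rewrite hypF_PSeries, <- (hyp_coef_0 a b c).
  apply PSeries_ge_coef0; try lra.
  - intro n; left; apply hyp_coef_pos; lra.
  - apply ex_pseries_hyp_coef; auto; rewrite Rabs_pos_eq; lra.
Qed.

Definition hypF_deriv (a b c x : R) : R := PSeries (PS_derive (hyp_coef a b c)) x.

Lemma is_derive_hypF a b c x : 0 < a <= 1 -> 0 < b <= c -> Rabs x < 1 ->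
  is_derive (hypF a b c) x (hypF_deriv a b c x).
Proof.
  intros; apply (is_derive_ext (PSeries (hyp_coef a b c))).
  - intro t; symmetry; apply hypF_PSeries.
  - apply is_derive_PSeries, hyp_coef_inside; auto.
Qed.

Lemma PS_incr_1_derive (u : nat -> R) n : PS_incr_1 (PS_derive u) n = INR n * u n.
Proof. destruct n; [simpl; unfold zero; simpl; ring | reflexivity]. Qed.

Lemma hypF_contiguous_b a b c x : 0 < a <= 1 -> 0 < b -> b + 1 <= c -> Rabs x < 1 ->
  x * hypF_deriv a b c x = b * (hypF a (b + 1) c x - hypF a b c x).
Proof.
  intros Ha Hb Hc Hx; unfold hypF_deriv.
  rewrite <- PSeries_incr_1, !hypF_PSeries, <- PSeries_minus, <- PSeries_scal
    by (apply ex_pseries_hyp_coef; auto; lra).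
  apply PSeries_ext; intro n; rewrite PS_incr_1_derive.
  transitivity (b * (hyp_coef a (b + 1) c n - hyp_coef a b c n)); [|reflexivity].
  rewrite Rmult_minus_distr_l, hyp_coef_shift; ring.
Qed.

Lemma hyp_coef_2b1_succ a b k : 0 < b ->
  INR (S k) * hyp_coef a (b + 1) (2 * b + 1) (S k) - INR k * hyp_coef a (b + 1) (2 * b + 1) k
  = b * (hyp_coef a b (2 * b + 1) (S k) - hyp_coef a (b + 1) (2 * b + 1) (S k))
    + a * hyp_coef a (b + 1) (2 * b + 1) k.
Proof.
  intro hb; pose proof (poch_shift b k) as Hs.
  assert (Hb1 : poch (b + 1) k = poch b k * (b + INR k) / b) by (rewrite <- Hs; field; lra).
  pose proof (poch_pos (2 * b + 1) k ltac:(lra)); pose proof (INR_fact_lt_0 k).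
  pose proof (pos_INR k).
  unfold hyp_coef; simpl poch; rewrite fact_simpl, mult_INR, S_INR, Hb1.
  field; repeat split; lra.
Qed.

Lemma hypF_contiguous_2b1 a b x : 0 < a <= 1 -> 0 < b -> Rabs x < 1 ->
  x * (1 - x) * hypF_deriv a (b + 1) (2 * b + 1) x
  = b * hypF a b (2 * b + 1) x + (a * x - b) * hypF a (b + 1) (2 * b + 1) x.
Proof.
  intros Ha Hb Hx; unfold hypF_deriv.
  set (f := hyp_coef a b (2 * b + 1)); set (g := hyp_coef a (b + 1) (2 * b + 1)).
  set (K := PS_incr_1 (PS_derive g)).
  assert (exf : ex_pseries f x) by (apply ex_pseries_hyp_coef; auto; lra).
  assert (exg : ex_pseries g x) by (apply ex_pseries_hyp_coef; auto; lra).
  assert (exK : ex_pseries K x).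
  { apply ex_pseries_incr_1, ex_pseries_derive, hyp_coef_inside; auto; lra. }
  transitivity (PSeries (PS_minus K (PS_incr_1 K)) x).
  { rewrite PSeries_minus by (auto; apply ex_pseries_incr_1; exact exK).
    unfold K; rewrite !PSeries_incr_1; ring. }
  transitivity (PSeries (PS_plus (PS_scal b (PS_minus f g)) (PS_scal a (PS_incr_1 g))) x).
  { apply PSeries_ext; intros [|k].
    - change (0 - 0 = b * (f 0%nat - g 0%nat) + a * 0).
      unfold f, g; rewrite !hyp_coef_0; ring.
    - change (K (S k) - K k = b * (f (S k) - g (S k)) + a * g k).
      unfold K; rewrite !PS_incr_1_derive; apply hyp_coef_2b1_succ; exact Hb. }
  rewrite PSeries_plus, !PSeries_scal, PSeries_minus, PSeries_incr_1, !hypF_PSeries;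
    fold f g; auto; [ring | ..].
  - apply ex_pseries_scal; [apply Rmult_comm | apply ex_pseries_minus; auto].
  - apply ex_pseries_scal; [apply Rmult_comm | apply ex_pseries_incr_1; auto].
Qed.

Section Quotient.

Variables a b : R.
Hypothesis ha : 0 < a < 1.
Hypothesis hb : 0 < b.

Local Notation F := (hypF a b (2 * b + 1)).
Local Notation G := (hypF a (b + 1) (2 * b + 1)).
Local Notation p := (p0 a b).

Lemma ratio_num_ge_1 t : 0 <= t < 1 -> 1 <= F t.
Proof. intro; apply hypF_ge_1; lra. Qed.

Lemma ratio_den_ge_1 t : 0 <= t < 1 -> 1 <= G t.
Proof. intro; apply hypF_ge_1; lra. Qed.

Definition hyp_ratio t := F t / G t.

Definition hyp_ratio' t :=
  (hypF_deriv a b (2 * b + 1) t * G t - F t * hypF_deriv a (b + 1) (2 * b + 1) t) / G t ^ 2.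

Lemma hyp_ratio_0 : hyp_ratio 0 = 1.
Proof. unfold hyp_ratio; rewrite !hypF_0; field. Qed.

Lemma hyp_ratio_pos t : 0 <= t < 1 -> 0 < hyp_ratio t.
Proof.
  intro ht; pose proof (ratio_num_ge_1 t ht); pose proof (ratio_den_ge_1 t ht).
  apply Rdiv_lt_0_compat; lra.
Qed.

Lemma is_derive_hyp_ratio t : 0 <= t < 1 -> is_derive hyp_ratio t (hyp_ratio' t).
Proof.
  intro ht; assert (Rabs t < 1) by (rewrite Rabs_pos_eq; lra).
  apply (is_derive_div F G); [apply is_derive_hypF; auto; lra..|].
  pose proof (ratio_den_ge_1 t ht); lra.
Qed.

Lemma hyp_ratio_riccati t : 0 < t < 1 ->
  hyp_ratio' t
  = (b * (1 - t) + (b - a) * t * hyp_ratio t - b * hyp_ratio t ^ 2) / (t * (1 - t)).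
Proof.
  intro ht; assert (hx : Rabs t < 1) by (rewrite Rabs_pos_eq; lra).
  pose proof (hypF_contiguous_b a b (2 * b + 1) t ltac:(lra) hb ltac:(lra) hx) as R1.
  pose proof (hypF_contiguous_2b1 a b t ltac:(lra) hb hx) as R2.
  pose proof (ratio_den_ge_1 t ltac:(lra)).
  assert (E1 : hypF_deriv a b (2 * b + 1) t = b * (G t - F t) / t)
    by (rewrite <- R1; field; lra).
  assert (E2 : hypF_deriv a (b + 1) (2 * b + 1) t
                = (b * F t + (a * t - b) * G t) / (t * (1 - t)))
    by (rewrite <- R2; field; lra).
  unfold hyp_ratio', hyp_ratio; rewrite E1, E2; field; lra.
Qed.

Lemma p0_bounds : 0 < p < 1.
Proof.
  unfold p0; split; [apply Rdiv_lt_0_compat; lra|].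
  apply (Rmult_lt_reg_r (2 * b + 1)); [lra|]; field_simplify; lra.
Qed.

Definition hyp_ratio_lb t := (1 - t) / (1 - (1 - p) * t).

Lemma hyp_ratio_lb_denom_pos t : 0 <= t < 1 -> 0 < 1 - (1 - p) * t.
Proof. intro; pose proof p0_bounds; nra. Qed.

Lemma hyp_ratio_lb_pos t : 0 <= t < 1 -> 0 < hyp_ratio_lb t.
Proof.
  intro ht; pose proof (hyp_ratio_lb_denom_pos t ht).
  apply Rdiv_lt_0_compat; lra.
Qed.

Definition ratio_gap t := hyp_ratio t - hyp_ratio_lb t.
Definition ratio_gap' t := hyp_ratio' t + p / (1 - (1 - p) * t) ^ 2.
Definition ratio_gap_coef t :=
  ((b - a) * t - b * (hyp_ratio t + hyp_ratio_lb t)) / (t * (1 - t)).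
Definition ratio_gap_source t := t * p * (1 - p) * (b + 1) / (1 - (1 - p) * t) ^ 2.

Lemma is_derive_ratio_gap t : 0 <= t < 1 -> is_derive ratio_gap t (ratio_gap' t).
Proof.
  intro ht; pose proof (hyp_ratio_lb_denom_pos t ht).
  unfold ratio_gap.
  replace (ratio_gap' t) with (hyp_ratio' t - (- p / (1 - (1 - p) * t) ^ 2))
    by (unfold ratio_gap'; field; lra).
  apply (is_derive_minus hyp_ratio hyp_ratio_lb); [apply is_derive_hyp_ratio, ht|].
  unfold hyp_ratio_lb; auto_derive; [lra|]; field; lra.
Qed.

Lemma ratio_gap_ode t : 0 < t < 1 ->
  ratio_gap' t = ratio_gap_coef t * ratio_gap t + ratio_gap_source t.
Proof.
  intro ht; pose proof (hyp_ratio_lb_denom_pos t ltac:(lra)).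
  unfold ratio_gap', ratio_gap, ratio_gap_coef, ratio_gap_source, hyp_ratio_lb.
  rewrite hyp_ratio_riccati by exact ht.
  unfold p0 in *; field; repeat split; nra.
Qed.

Lemma hyp_ratio_lb_lt t : 0 < t < 1 -> hyp_ratio_lb t < hyp_ratio t.
Proof.
  intro ht; enough (0 < ratio_gap t) by (unfold ratio_gap in *; lra); revert t ht.
  apply (linear_ode_pos ratio_gap ratio_gap' ratio_gap_coef ratio_gap_source).
  - exact is_derive_ratio_gap.
  - unfold ratio_gap, hyp_ratio_lb; rewrite hyp_ratio_0; field.
  - exact ratio_gap_ode.
  - intros t ht; destruct (frac_bounded_above
      (fun u => (b - a) * u - b * (hyp_ratio u + hyp_ratio_lb u)) b ltac:(lra)) with t
      as [K HK]; [|exact ht|exists K; exact HK].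
    intros u hu; pose proof (hyp_ratio_pos u ltac:(lra));
      pose proof (hyp_ratio_lb_pos u ltac:(lra)); nra.
  - intros t ht; pose proof (hyp_ratio_lb_denom_pos t ltac:(lra)); pose proof p0_bounds.
    unfold ratio_gap_source; apply Rdiv_lt_0_compat; [|apply pow_lt; lra].
    apply Rmult_lt_0_compat; [|lra]; apply Rmult_lt_0_compat; [|lra].
    apply Rmult_lt_0_compat; lra.
Qed.

Definition Qp0_num t := b * (1 - t) + b * (1 - 2 * p) * t * hyp_ratio t - b * hyp_ratio t ^ 2.
Definition Qp0_num' t := - b + b * (1 - 2 * p) * hyp_ratio t
  + b * (1 - 2 * p) * t * hyp_ratio' t - 2 * b * hyp_ratio t * hyp_ratio' t.
Definition Qp0_num_coef t :=
  (b * (1 - 2 * p) * t - 2 * b * hyp_ratio t - 2 * p * t) / (t * (1 - t)).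
Definition Qp0_num_source t :=
  b * (hyp_ratio t * (1 - (1 - p) * t) - (1 - t)) / (1 - t).

Lemma is_derive_Qp0_num t : 0 <= t < 1 -> is_derive Qp0_num t (Qp0_num' t).
Proof.
  intro ht; pose proof (is_derive_hyp_ratio t ht) as Hr.
  unfold Qp0_num; auto_derive; [repeat split; exists (hyp_ratio' t); exact Hr|].
  replace (Derive (fun x => hyp_ratio x) t) with (hyp_ratio' t)
    by (symmetry; apply is_derive_unique, Hr).
  unfold Qp0_num'; ring.
Qed.

Lemma Qp0_num_ode t : 0 < t < 1 ->
  Qp0_num' t = Qp0_num_coef t * Qp0_num t + (1 - 2 * p) * Qp0_num_source t.
Proof.
  intro ht; unfold Qp0_num', Qp0_num, Qp0_num_coef, Qp0_num_source.
  rewrite hyp_ratio_riccati by exact ht.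
  unfold p0; field; repeat split; lra.
Qed.

Lemma Qp0_num_sign t : 0 < t < 1 -> exists k, 0 < k /\ Qp0_num t = (1 - 2 * p) * k.
Proof.
  revert t; apply (linear_ode_sign Qp0_num Qp0_num' Qp0_num_coef Qp0_num_source).
  - exact is_derive_Qp0_num.
  - unfold Qp0_num; rewrite hyp_ratio_0; ring.
  - exact Qp0_num_ode.
  - intros t ht; destruct (frac_bounded_above
      (fun u => b * (1 - 2 * p) * u - 2 * b * hyp_ratio u - 2 * p * u) b ltac:(lra)) with t
      as [K HK]; [|exact ht|exists K; exact HK].
    intros u hu; pose proof (hyp_ratio_pos u ltac:(lra)); pose proof p0_bounds.
    assert (0 < b * p) by nra; nra.
  - intros t ht; pose proof (hyp_ratio_lb_lt t ht) as Hlb.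
    pose proof (hyp_ratio_lb_denom_pos t ltac:(lra)).
    unfold hyp_ratio_lb in Hlb; unfold Qp0_num_source.
    apply Rdiv_lt_0_compat; [|lra]; apply Rmult_lt_0_compat; [lra|].
    apply (Rmult_lt_compat_r (1 - (1 - p) * t)) in Hlb; [|lra].
    unfold Rdiv in Hlb; rewrite Rmult_assoc, Rinv_l, Rmult_1_r in Hlb; lra.
Qed.

Definition Qp0_deriv t :=
  exp (- p * ln (1 - t)) * (p / (1 - t) * hyp_ratio t + hyp_ratio' t).

Lemma Qp0_exp_ln t : Qp0 a b t = exp (- p * ln (1 - t)) * hyp_ratio t.
Proof. unfold Qp0, Rpower, hyp_ratio, Rdiv; ring. Qed.

Lemma Qp0_0 : Qp0 a b 0 = 1.
Proof. rewrite Qp0_exp_ln, hyp_ratio_0, Rminus_0_r, ln_1, Rmult_0_r, exp_0; ring. Qed.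

Lemma is_derive_Qp0 t : 0 <= t < 1 -> is_derive (Qp0 a b) t (Qp0_deriv t).
Proof.
  intro ht; pose proof (is_derive_hyp_ratio t ht) as Hr.
  apply (is_derive_ext (fun t => exp (- p * ln (1 - t)) * hyp_ratio t));
    [intro; symmetry; apply Qp0_exp_ln|].
  auto_derive; [repeat split; try (exists (hyp_ratio' t); exact Hr); lra|].
  replace (Derive (fun x => hyp_ratio x) t) with (hyp_ratio' t)
    by (symmetry; apply is_derive_unique, Hr).
  replace (1 + - t) with (1 - t) by ring; unfold Qp0_deriv; field; lra.
Qed.

Lemma Qp0_deriv_sign t : 0 < t < 1 -> exists k, 0 < k /\ Qp0_deriv t = (1 - 2 * p) * k.
Proof.
  intro ht; destruct (Qp0_num_sign t ht) as [k [hk Hk]].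
  exists (exp (- p * ln (1 - t)) * k / (t * (1 - t))); split.
  - pose proof (exp_pos (- p * ln (1 - t))).
    apply Rdiv_lt_0_compat; [apply Rmult_lt_0_compat|]; nra.
  - unfold Qp0_deriv; rewrite hyp_ratio_riccati by exact ht.
    replace ((1 - 2 * p) * (exp (- p * ln (1 - t)) * k / (t * (1 - t))))
      with (exp (- p * ln (1 - t)) * Qp0_num t / (t * (1 - t)))
      by (rewrite Hk; field; lra).
    unfold Qp0_num, p0; field; repeat split; lra.
Qed.

Lemma Qp0_increment s t : 0 <= s -> s < t -> t < 1 ->
  exists k, 0 < k /\ Qp0 a b t - Qp0 a b s = (1 / 2 - (a - b)) * k.
Proof.
  intros hs hst ht.
  destruct (MVT_is_derive (Qp0 a b) Qp0_deriv s t hst) as [c [hc E]];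
    [intros c hc; apply is_derive_Qp0; lra|].
  destruct (Qp0_deriv_sign c ltac:(lra)) as [k [hk Hk]].
  exists (2 * k * (t - s) / (2 * b + 1)); split.
  - apply Rdiv_lt_0_compat; [apply Rmult_lt_0_compat|]; lra.
  - rewrite E, Hk; unfold p0; field; lra.
Qed.

Lemma hypF_eq_Qp0_mul t : 0 < t < 1 ->
  F t = Qp0 a b t * (Rpower (1 - t) p * G t) /\ 0 < Rpower (1 - t) p * G t.
Proof.
  intro ht; pose proof (ratio_den_ge_1 t ltac:(lra)).
  pose proof (exp_pos (p * ln (1 - t))); unfold Rpower.
  split; [|apply Rmult_lt_0_compat; lra].
  unfold Qp0, Rpower; replace (- p * ln (1 - t)) with (- (p * ln (1 - t))) by ring.
  rewrite exp_Ropp; field; lra.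
Qed.

End Quotient.

Theorem lemma3 (a b : R) (ha : 0 < a < 1) (hb : 0 < b) :
  (a - b > 1/2 ->
     forall s t, 0 < s -> s < t -> t < 1 -> Qp0 a b t < Qp0 a b s) /\
  (a - b < 1/2 ->
     forall s t, 0 < s -> s < t -> t < 1 -> Qp0 a b s < Qp0 a b t) /\
  (a - b = 1/2 -> forall t, 0 < t < 1 -> Qp0 a b t = 1) /\
  (a - b > 1/2 -> forall t, 0 < t < 1 ->
     hypF a b (2 * b + 1) t < Rpower (1 - t) (p0 a b) * hypF a (b + 1) (2 * b + 1) t) /\
  (a - b < 1/2 -> forall t, 0 < t < 1 ->
     hypF a b (2 * b + 1) t > Rpower (1 - t) (p0 a b) * hypF a (b + 1) (2 * b + 1) t).
Proof.
  pose proof (Qp0_increment a b ha hb) as Hinc.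
  pose proof (Qp0_0 a b) as HQ0.
  split; [|split; [|split; [|split]]].
  - intros h s t hs hst ht; destruct (Hinc s t) as [k [hk E]]; [lra..|nra].
  - intros h s t hs hst ht; destruct (Hinc s t) as [k [hk E]]; [lra..|nra].
  - intros h t ht; destruct (Hinc 0 t) as [k [hk E]]; [lra..|].
    rewrite HQ0, h in E; lra.
  - intros h t ht; destruct (Hinc 0 t) as [k [hk E]]; [lra..|].
    assert (Qp0 a b t < 1) by (rewrite HQ0 in E; nra).
    destruct (hypF_eq_Qp0_mul a b ha hb t ht) as [HF HW]; rewrite HF; nra.
  - intros h t ht; destruct (Hinc 0 t) as [k [hk E]]; [lra..|].
    assert (1 < Qp0 a b t) by (rewrite HQ0 in E; nra).
    destruct (hypF_eq_Qp0_mul a b ha hb t ht) as [HF HW]; rewrite HF; nra.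
Qed.
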